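(* Let $n\ge 2$ and let $\ell_1,\ell_2,\ell_3\subset\mathbb R^n$ be lines through the origin. The following are equivalent: (1) $\dim(\ell_1+\ell_2+\ell_3)=2$; (2) for every triple of points $z_1,z_2,z_3\in\mathbb R^n$ there exists a rigid motion $g$ of $\mathbb R^n$ with $g(z_j)\in\ell_j$ for each $j=1,2,3$.
   Context: A rigid motion of $\mathbb R^n$ is a map $x\mapsto Rx+T$ with $R\in\mathrm{SO}(n)$ and $T\in\mathbb R^n$. *)

From mathcomp Require Import all_boot all_order all_algebra.
From mathcomp Require Import reals.
Set Implicit Arguments. Unset Strict Implicit. Unset Printing Implicit Defensive.
Import Order.TTheory GRing.Theory Num.Theory.
Local Open Scope ring_scope.

Definition SOmx (R : realType) (n : nat) (A : 'M[R]_n) : Prop :=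
  A *m A^T = 1%:M /\ \det A = 1.

Definition rigid_motion (R : realType) (n : nat) (g : 'rV[R]_n -> 'rV[R]_n) : Prop :=
  exists (A : 'M[R]_n) (T : 'rV[R]_n), SOmx A /\ forall x, g x = x *m A + T.

(* A line through the origin: a subspace (row space of a square matrix) of rank 1. *)
Definition line0 (R : realType) (n : nat) (L : 'M[R]_n) : Prop := \rank L = 1%N.

From mathcomp Require Import all_boot all_order all_algebra.
From mathcomp Require Import reals.
From mathcomp Require Import ring lra zify.
Import Order.TTheory GRing.Theory Num.Theory.
Local Open Scope ring_scope.
Set Implicit Arguments. Unset Strict Implicit. Unset Printing Implicit Defensive.

(* (2) implies (1): a rigid motion maps the collinear points 0, e, 2e to collinear
   points, so they cannot be sent onto three independent lines (they would all have
   to vanish), and it maps three affinely independent points to affinely independent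
   points, so it cannot send them into a single line.
   (1) implies (2): up to exchanging l2 and l3, l3 lies in the plane P = l1 + l2.
   Two Householder reflections (and a third one to fix the determinant) rotate
   z2 - z1 and z3 - z1 into P.  After a further rotation by t inside P, the
   translation putting z1 on l1 and z2 on l2 is read off the splitting P = l1 + l2,
   and the image of z3 then depends linearly on (cos t, sin t) and lies in P; as l3
   has codimension one in P, some point of the unit circle sends it into l3. *)

Section OrthogonalMatrices.
Variable R : comPzRingType.

Definition orthogonalmx m n (A : 'M[R]_(m, n)) := A *m A^T = 1%:M.

Lemma det_1D_mulmxC n k (A : 'M[R]_(n, k)) (B : 'M[R]_(k, n)) :
  \det (1%:M + A *m B) = \det (1%:M + B *m A).
Proof.
have e1 : block_mx 1%:M (-A) B 1%:M =
   block_mx 1%:M 0 B 1%:M *m block_mx 1%:M (-A) 0 (1%:M + B *m A).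
  rewrite mulmx_block ?mul1mx ?mulmx1 ?mul0mx ?mulmx0 ?addr0 ?add0r.
  by rewrite mulmxN addrCA addNr addr0.
have e2 : block_mx 1%:M (-A) B 1%:M =
   block_mx (1%:M + A *m B) (-A) 0 1%:M *m block_mx 1%:M 0 B 1%:M.
  rewrite mulmx_block ?mul1mx ?mulmx1 ?mul0mx ?mulmx0 ?addr0 ?add0r.
  by rewrite mulNmx addrK.
have := congr1 determinant e1; rewrite e2 !det_mulmx det_lblock det_ublock.
by rewrite !det1 !mul1r !mulr1 det_ublock det1 mul1r.
Qed.

Lemma orthogonalmxM n (A B : 'M[R]_n) :
  orthogonalmx A -> orthogonalmx B -> orthogonalmx (A *m B).
Proof.
by move=> oA oB; rewrite /orthogonalmx trmx_mul mulmxA -(mulmxA A) oB mulmx1.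
Qed.

Lemma orthogonalmx_1D_conj k n (X : 'M[R]_(k, n)) (M : 'M[R]_k) :
  M + M^T + M *m (X *m X^T) *m M^T = 0 ->
  orthogonalmx (1%:M + X^T *m M *m X).
Proof.
move=> M0; rewrite /orthogonalmx raddfD /= trmx1 !trmx_mul trmxK.
suff -> : (1%:M + X^T *m M *m X) *m (1%:M + X^T *m (M^T *m X)) =
          1%:M + X^T *m (M + M^T + M *m (X *m X^T) *m M^T) *m X.
  by rewrite M0 mulmx0 mul0mx addr0.
rewrite mulmxDl !mulmxDr !mul1mx !mulmx1 !mulmxDl !mulmxA -!addrA.
by rewrite [X in _ + X]addrCA.
Qed.

Lemma det_mx2 (A : 'M[R]_2) : \det A = A 0 0 * A 1 1 - A 0 1 * A 1 0.
Proof.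
rewrite (expand_det_row _ 0) !big_ord_recr big_ord0 /= add0r /cofactor.
rewrite !det_mx11 !mxE /=.
have -> : widen_ord (leqnSn 1) ord_max = 0 :> 'I_2 by apply/val_inj.
have -> : lift 0 0 = 1 :> 'I_2 by apply/val_inj.
have -> : ord_max = 1 :> 'I_2 by apply/val_inj.
have -> : lift (1 : 'I_2) (0 : 'I_1) = 0 :> 'I_2 by apply/val_inj.
by rewrite expr0 expr1 mul1r mulN1r mulrN.
Qed.

End OrthogonalMatrices.

Section MatricesOverField.
Variable F : fieldType.

Lemma orthogonalmx_row_free m n (A : 'M[F]_(m, n)) : orthogonalmx A -> row_free A.
Proof.
move=> oA; rewrite /row_free eqn_leq rank_leq_row /=.
by rewrite -{1}(mxrank1 F m) -oA mxrankM_maxl.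
Qed.

Lemma det_orthogonalmx n (A : 'M[F]_n) :
  orthogonalmx A -> \det A = 1 \/ \det A = -1.
Proof.
move=> oA; have : \det A ^+ 2 == 1 by rewrite expr2 -{2}det_tr -det_mulmx oA det1.
by rewrite sqrf_eq1 => /orP [] /eqP; [left | right].
Qed.

Lemma lines_in_plane n (L1 L2 L3 : 'M[F]_n) :
  \rank L1 = 1%N -> \rank (L1 + L2 + L3)%MS = 2%N ->
  (\rank (L1 + L2)%MS = 2%N /\ (L3 <= L1 + L2)%MS) \/
  (\rank (L1 + L3)%MS = 2%N /\ (L2 <= L1 + L3)%MS).
Proof.
move=> r1 rS.
have sS : (L1 + L2 <= L1 + L2 + L3)%MS := addsmxSl _ _.
have [r12|r12] := eqVneq (\rank (L1 + L2)%MS) 2%N.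
  left; split => //; have /eqmxP -> : (L1 + L2 == L1 + L2 + L3)%MS.
    by rewrite -(mxrank_leqif_eq sS).2 r12 rS.
  exact: addsmxSr.
have /eqmxP L12 : (L1 == L1 + L2)%MS.
  rewrite -(mxrank_leqif_eq (addsmxSl L1 L2)).2 r1 eqn_leq -r1 mxrankS ?addsmxSl //.
  by have := mxrankS sS; rewrite rS; lia.
have L21 : (L2 <= L1)%MS by rewrite L12 addsmxSr.
have /eqmxP L13 : (L1 + L3 == L1 + L2 + L3)%MS.
  apply/andP; split; first by rewrite addsmxS ?addsmxSl.
  by rewrite !addsmx_sub addsmxSl addsmxSr (submx_trans L21) ?addsmxSl.
right; split; first by rewrite L13.
by rewrite (submx_trans L21) ?addsmxSl.
Qed.

End MatricesOverField.

Section EuclideanSpace.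
Variable R : realFieldType.

Definition dot n (x y : 'rV[R]_n) := (x *m y^T) 0 0.

Lemma dotE n (x y : 'rV[R]_n) : x *m y^T = (dot x y)%:M.
Proof. exact: mx11_scalar. Qed.

Lemma dotC n (x y : 'rV[R]_n) : dot x y = dot y x.
Proof.
by have := congr1 (fun A : 'M[R]_1 => A 0 0) (trmx_mul x y^T); rewrite trmxK mxE.
Qed.

Lemma dot_row m n (W : 'M[R]_(m, n)) i j : dot (row i W) (row j W) = (W *m W^T) i j.
Proof. by rewrite /dot !mxE; apply: eq_bigr => k _; rewrite !mxE. Qed.

Lemma dotBl n (x y z : 'rV[R]_n) : dot (x - y) z = dot x z - dot y z.
Proof. by rewrite /dot mulmxBl mxE [X in _ + X]mxE. Qed.

Lemma dotZl n a (x z : 'rV[R]_n) : dot (a *: x) z = a * dot x z.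
Proof. by rewrite /dot -scalemxAl mxE. Qed.

Lemma dotBr n (x y z : 'rV[R]_n) : dot z (x - y) = dot z x - dot z y.
Proof. by rewrite dotC dotBl !(dotC z). Qed.

Lemma dotZr n a (x z : 'rV[R]_n) : dot z (a *: x) = a * dot z x.
Proof. by rewrite dotC dotZl dotC. Qed.

Lemma dotxx n (x : 'rV[R]_n) : dot x x = \sum_j x 0 j ^+ 2.
Proof. by rewrite /dot mxE; apply: eq_bigr => j _; rewrite mxE expr2. Qed.

Lemma dot_ge0 n (x : 'rV[R]_n) : 0 <= dot x x.
Proof. by rewrite dotxx sumr_ge0 // => j _; rewrite sqr_ge0. Qed.

Lemma dot_eq0 n (x : 'rV[R]_n) : (dot x x == 0) = (x == 0).
Proof.
apply/idP/eqP => [|->]; last by rewrite /dot mul0mx mxE.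
rewrite dotxx psumr_eq0 => [/allP x0|j _]; last by rewrite sqr_ge0.
apply/rowP => j; rewrite mxE; apply/eqP; rewrite -sqrf_eq0.
exact: implyP (x0 j (mem_index_enum j)) isT.
Qed.

Definition householder n (w : 'rV[R]_n) : 'M[R]_n :=
  1%:M + w^T *m (- 2 / dot w w)%:M *m w.

Lemma householderE n (w x : 'rV[R]_n) :
  x *m householder w = x + (- 2 / dot w w * dot x w) *: w.
Proof.
by rewrite mulmxDr mulmx1 !mulmxA dotE -scalar_mxM mul_scalar_mx mulrC.
Qed.

Lemma householder_orthogonal n (w : 'rV[R]_n) : orthogonalmx (householder w).
Proof.
apply: orthogonalmx_1D_conj; rewrite tr_scalar_mx dotE -!scalar_mxM -!raddfD /=.
have [w0|w0] := eqVneq (dot w w) 0; first by rewrite w0 invr0 !mulr0 !addr0 raddf0.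
suff -> : -2 / dot w w + -2 / dot w w + -2 / dot w w * dot w w * (-2 / dot w w) = 0.
  by rewrite raddf0.
by field.
Qed.

Lemma det_householder n (w : 'rV[R]_n) : w != 0 -> \det (householder w) = -1.
Proof.
rewrite -dot_eq0 => w0; rewrite /householder -mulmxA det_1D_mulmxC -mulmxA.
rewrite dotE -scalar_mxM -raddfD /= det_mx11 mxE eqxx mulr1n.
by field.
Qed.

Lemma householder_fix n (w x : 'rV[R]_n) : dot x w = 0 -> x *m householder w = x.
Proof. by move=> xw; rewrite householderE xw mulr0 scale0r addr0. Qed.

Lemma householder_to n (a b : 'rV[R]_n) :
  dot a a = dot b b -> a *m householder (a - b) = b.
Proof.
move=> ab; rewrite householderE.
have dww : dot (a - b) (a - b) = 2 * (dot a a - dot a b).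
  by rewrite !dotBl !dotBr -ab (dotC b a); ring.
have [t0|t0] := eqVneq (dot a a - dot a b) 0.
  have : a - b == 0 by rewrite -dot_eq0 dww t0 mulr0.
  by rewrite subr_eq0 => /eqP <-; rewrite subrr scaler0 addr0.
rewrite dww dotBr.
have -> : - 2 / (2 * (dot a a - dot a b)) * (dot a a - dot a b) = -1 by field.
by rewrite scaleN1r opprB addrC subrK.
Qed.

Definition quarter_turn : 'M[R]_2 := \matrix_(i, j)
  (if (i == 0) && (j == 1) then 1 else if (i == 1) && (j == 0) then -1 else 0).

(* For [c = cos t] and [s = sin t], the rotation by [t] in the plane spanned by
   the orthonormal rows of [W], fixing the orthogonal complement of that plane. *)
Definition plane_rotation n (W : 'M[R]_(2, n)) c s : 'M[R]_n :=
  1%:M + W^T *m ((c - 1)%:M + s *: quarter_turn) *m W.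

Lemma plane_rotation_orthogonal n (W : 'M[R]_(2, n)) c s :
  orthogonalmx W -> c ^+ 2 + s ^+ 2 = 1 -> orthogonalmx (plane_rotation W c s).
Proof.
move=> oW cs; apply: orthogonalmx_1D_conj; rewrite oW mulmx1.
apply/matrixP => i j; rewrite !mxE !big_ord_recr big_ord0 /= !mxE.
by case: i j => [[|[|//]] ?] [[|[|//]] ?] /=; rewrite ?mulr1n ?mulr0n; nra.
Qed.

Lemma det_plane_rotation n (W : 'M[R]_(2, n)) c s :
  orthogonalmx W -> c ^+ 2 + s ^+ 2 = 1 -> \det (plane_rotation W c s) = 1.
Proof.
move=> oW cs; rewrite /plane_rotation -mulmxA det_1D_mulmxC -mulmxA oW mulmx1.
by rewrite det_mx2 !mxE /= ?mulr1n ?mulr0n; nra.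
Qed.

Lemma plane_rotationE n (W : 'M[R]_(2, n)) c s (x : 'rV[R]_n) :
  orthogonalmx W -> (x <= W)%MS ->
  x *m plane_rotation W c s = c *: x + s *: (x *m (W^T *m quarter_turn *m W)).
Proof.
move=> oW /submxP [y ->]; rewrite -!mulmxA mulmxDr mulmx1 !mulmxA -(mulmxA y) oW.
rewrite mulmx1 mul1mx mulmxDl mul_scalar_mx -scalemxAl !mulmxDr -!scalemxAr mulmxA.
by rewrite addrA; congr (_ + _); rewrite scalerBl scale1r addrC subrK.
Qed.

End EuclideanSpace.

Arguments quarter_turn {R}.

Section RealClosedField.
Variable R : rcfType.

Definition normalize n (x : 'rV[R]_n) := (Num.sqrt (dot x x))^-1 *: x.

Lemma dot_normalize n (x : 'rV[R]_n) : x != 0 -> dot (normalize x) (normalize x) = 1.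
Proof.
rewrite -dot_eq0 => x0; rewrite dotZl dotZr mulrA -expr2 exprVn.
by rewrite sqr_sqrtr ?dot_ge0 // mulVf.
Qed.

Lemma dot_sqrt_dotZ n (x u : 'rV[R]_n) : dot u u = 1 ->
  dot (Num.sqrt (dot x x) *: u) (Num.sqrt (dot x x) *: u) = dot x x.
Proof. by move=> uu; rewrite dotZl dotZr uu mulr1 -expr2 sqr_sqrtr ?dot_ge0. Qed.

Lemma orthonormal_frame_rank2 m n (P : 'M[R]_(m, n)) : \rank P = 2%N ->
  exists W : 'M[R]_(2, n), orthogonalmx W /\ (W :=: P)%MS.
Proof.
move=> rP; have [a aP a0] : exists2 a : 'rV_n, (a <= P)%MS & a != 0.
  by apply/rowV0Pn; rewrite -mxrank_eq0 rP.
have [b bP bNa] : exists2 b : 'rV_n, (b <= P)%MS & ~~ (b <= a)%MS.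
  have /row_subPn [i Ni] : ~~ (P <= a)%MS.
    by apply/negP => /mxrankS; rewrite rP rank_rV a0.
  by exists (row i P); rewrite ?row_sub.
pose u := normalize a; pose r := b - dot b u *: u; pose v := normalize r.
have uu : dot u u = 1 by apply: dot_normalize.
have r0 : r != 0.
  apply: contraNneq bNa => /subr0_eq ->.
  by rewrite !scalemx_sub.
have uv : dot u v = 0.
  have ur : dot u r = 0 by rewrite dotBr dotZr uu mulr1 (dotC u b) subrr.
  by rewrite dotZr ur mulr0.
have oW : orthogonalmx (col_mx u v).
  rewrite /orthogonalmx tr_col_mx mul_col_row !dotE uu dot_normalize // (dotC v u).
  by rewrite uv raddf0 -scalar_mx_block.
exists (col_mx u v); split => //; apply/eqmxP.
have WP : (col_mx u v <= P)%MS.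
  by rewrite col_mx_sub !scalemx_sub // addmx_sub // eqmx_opp !scalemx_sub.
rewrite -(mxrank_leqif_eq WP).2 rP.
by move/orthogonalmx_row_free/eqnP: oW => ->.
Qed.

(* Two reflections: the first moves [d2] onto the line of [u], the second fixes [u]
   and moves the component of the image of [d3] orthogonal to [u] onto the line of [v]. *)
Lemma orthogonal_into_frame n (W : 'M[R]_(2, n)) (d2 d3 : 'rV[R]_n) :
  orthogonalmx W ->
  exists A : 'M[R]_n, orthogonalmx A /\ (d2 *m A <= W)%MS /\ (d3 *m A <= W)%MS.
Proof.
move=> oW; pose u := row 0 W; pose v := row 1 W.
have uu : dot u u = 1 by rewrite dot_row oW mxE.
have uv : dot u v = 0 by rewrite dot_row oW mxE.
have vv : dot v v = 1 by rewrite dot_row oW mxE.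
pose H1 := householder (d2 - Num.sqrt (dot d2 d2) *: u).
pose e := d3 *m H1; pose r := e - dot e u *: u.
pose H2 := householder (r - Num.sqrt (dot r r) *: v).
have d2H1 : d2 *m H1 = Num.sqrt (dot d2 d2) *: u.
  by apply: householder_to; rewrite dot_sqrt_dotZ.
have rH2 : r *m H2 = Num.sqrt (dot r r) *: v.
  by apply: householder_to; rewrite dot_sqrt_dotZ.
have uH2 : u *m H2 = u.
  apply: householder_fix; rewrite !dotBr !dotZr uv uu (dotC u e).
  by rewrite mulr1 mulr0 subrr subr0.
have uW : (u <= W)%MS := row_sub 0 W.
exists (H1 *m H2); split; first by apply: orthogonalmxM; apply: householder_orthogonal.
rewrite !mulmxA d2H1 -scalemxAl uH2 scalemx_sub //; split => //.
rewrite -/e -[e](subrK (dot e u *: u)) -/r.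
by rewrite mulmxDl rH2 -scalemxAl uH2 addmx_sub // scalemx_sub // row_sub.
Qed.

Lemma rotation_into_frame n (W : 'M[R]_(2, n)) (d2 d3 : 'rV[R]_n) :
  orthogonalmx W -> exists A : 'M[R]_n,
    [/\ orthogonalmx A, \det A = 1, (d2 *m A <= W)%MS & (d3 *m A <= W)%MS].
Proof.
move=> oW; have [A [oA [d2A d3A]]] := orthogonal_into_frame d2 d3 oW.
have [dA|dA] := det_orthogonalmx oA; first by exists A.
pose u := row 0 W.
have u0 : u != 0 by rewrite -dot_eq0 dot_row oW mxE oner_neq0.
have uW : (u <= W)%MS := row_sub 0 W.
exists (A *m householder u); split.
- by apply: orthogonalmxM => //; apply: householder_orthogonal.
- by rewrite det_mulmx dA det_householder // mulrNN mulr1.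
- by rewrite mulmxA householderE addmx_sub // scalemx_sub.
- by rewrite mulmxA householderE addmx_sub // scalemx_sub.
Qed.

Lemma exists_unit_comb_sub m n (V : 'M[R]_(m, n)) (y1 y2 : 'rV[R]_n) :
  (\rank (V + y1 + y2)%MS <= \rank V + 1)%N ->
  exists c s, c ^+ 2 + s ^+ 2 = 1 /\ ((c *: y1 + s *: y2)%R <= V)%MS.
Proof.
move=> rVy; have [y1V|y1NV] := boolP (y1 <= V)%MS.
  by exists 1, 0; rewrite expr1n expr2 mulr0 addr0 scale1r scale0r addr0.
have y2Vy1 : (y2 <= V + y1)%MS.
  have sVy : (V + y1 <= V + y1 + y2)%MS := addsmxSl _ _.
  have /eqmxP -> : (V + y1 == V + y1 + y2)%MS.
    rewrite -(mxrank_leqif_eq sVy).2 eqn_leq mxrankS //=.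
    have : (V < V + y1)%MS by rewrite ltmxE addsmxSl addsmx_sub submx_refl.
    by rewrite ltmxErank => /andP [_]; lia.
  exact: addsmxSr.
have [[w t] /= y2E] := sub_addsmxP y2Vy1.
rewrite [t]mx11_scalar mul_scalar_mx in y2E; set k := t 0 0 in y2E.
have wV : w *m V = y2 - k *: y1 by rewrite y2E addrK.
pose r := Num.sqrt (k ^+ 2 + 1).
have k2 : k ^+ 2 + 1 != 0 by rewrite lt0r_neq0 // ltr_wpDl ?sqr_ge0.
have r2 : r ^+ 2 = k ^+ 2 + 1 by rewrite sqr_sqrtr // addr_ge0 ?sqr_ge0.
exists (- (k / r)), r^-1; split.
  by rewrite sqrrN exprMn !exprVn r2; field.
rewrite (_ : _ + _ = r^-1 *: (w *m V)) ?scalemx_sub ?submxMl //.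
by rewrite wV scalerBr scalerA addrC mulrC scaleNr.
Qed.

End RealClosedField.

Section RigidMotionsOntoLines.
Variable R : realType.

Lemma rigid_motion_onto_coplanar_lines n (L1 L2 L3 : 'M[R]_n) :
  \rank L3 = 1%N -> \rank (L1 + L2)%MS = 2%N -> (L3 <= L1 + L2)%MS ->
  forall z1 z2 z3 : 'rV[R]_n, exists g : 'rV[R]_n -> 'rV[R]_n,
    rigid_motion g /\ (g z1 <= L1)%MS /\ (g z2 <= L2)%MS /\ (g z3 <= L3)%MS.
Proof.
move=> r3 r12 s3 z1 z2 z3.
have [W [oW WP]] := orthonormal_frame_rank2 r12.
have [A0 [oA0 dA0 a1W b1W]] := rotation_into_frame (z2 - z1) (z3 - z1) oW.
pose J := W^T *m quarter_turn *m W; pose P := proj_mx L1 L2.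
have JW (x : 'rV[R]_n) : (x *m J <= L1 + L2)%MS by rewrite -WP /J mulmxA submxMl.
have PL (x : 'rV[R]_n) : (x *m P <= L1 + L2)%MS.
  exact: submx_trans (proj_mx_sub _ _ _) (addsmxSl _ _).
pose a1 := (z2 - z1) *m A0; pose b1 := (z3 - z1) *m A0.
pose w1 := b1 - a1 *m P; pose w2 := b1 *m J - a1 *m J *m P.
have [c [s [cs w12]]] :
    exists c s, c ^+ 2 + s ^+ 2 = 1 /\ ((c *: w1 + s *: w2)%R <= L3)%MS.
  apply: exists_unit_comb_sub; rewrite r3 -[(1 + 1)%N]/2%N -r12 mxrankS //.
  rewrite !addsmx_sub s3 /=; apply/andP.
  by split; apply: addmx_sub; rewrite ?eqmx_opp ?JW ?PL // -WP.
pose A := A0 *m plane_rotation W c s; pose a := c *: a1 + s *: (a1 *m J).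
have zA z : ((z - z1) *m A0 <= W)%MS ->
    (z - z1) *m A = c *: ((z - z1) *m A0) + s *: ((z - z1) *m A0 *m J).
  by move=> zW; rewrite /A mulmxA plane_rotationE.
exists (fun x => (x - z1) *m A - a *m P); split.
  exists A, (- (z1 *m A) - a *m P); split => [|x]; last by rewrite mulmxBl addrA.
  split; first by apply: orthogonalmxM => //; apply: plane_rotation_orthogonal.
  by rewrite det_mulmx dA0 det_plane_rotation ?mul1r.
split; first by rewrite subrr mul0mx sub0r eqmx_opp proj_mx_sub.
split.
  rewrite zA // -/a1 -/a; apply: proj_mx_compl_sub.
  by rewrite addmx_sub // scalemx_sub // ?JW -WP.
rewrite zA // (_ : _ - _ = c *: w1 + s *: w2) //.
by rewrite -/b1 /a /w1 /w2 mulmxDl -!scalemxAl !scalerBr opprD addrACA.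
Qed.

Lemma no_rigid_motion_onto_independent_lines n (L1 L2 L3 : 'M[R]_n) (e : 'rV[R]_n) :
  \rank L1 = 1%N -> \rank L2 = 1%N -> \rank L3 = 1%N ->
  (2 < \rank (L1 + L2 + L3)%MS)%N -> e != 0 ->
  forall g, rigid_motion g ->
  ~ ((g 0 <= L1)%MS /\ (g e <= L2)%MS /\ (g (2 *: e) <= L3)%MS).
Proof.
move=> r1 r2 r3 rS e0 g [A [T [[oA _] gE]]] [g1 [g2 g3]].
have := mxrank_sum_cap L1 L2; have := mxrank_sum_cap (L1 + L2)%MS L3.
rewrite r1 r2 r3 => rS3 rS12.
have cap0 (M1 M2 : 'M[R]_n) (x : 'rV[R]_n) :
    \rank (M1 :&: M2)%MS = 0%N -> (x <= M1)%MS -> (x <= M2)%MS -> x = 0.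
  move=> /eqP; rewrite mxrank_eq0 => /eqP c0 xM1 xM2.
  by apply/eqP; rewrite -submx0 -c0 sub_capmx xM1.
have g3E : g (2 *: e) = 2 *: g e - g 0.
  by rewrite !gE mul0mx add0r -scalemxAl scalerDr [2 *: T]scaler_nat mulr2n addrA addrK.
have g30 : g (2 *: e) = 0.
  apply: (cap0 (L1 + L2)%MS L3 _ _ _ g3); first by lia.
  rewrite g3E addmx_sub ?eqmx_opp ?scalemx_sub //.
    exact: submx_trans g2 (addsmxSr _ _).
  exact: submx_trans g1 (addsmxSl _ _).
have g00 : g 0 = 0.
  apply: (cap0 L1 L2 _ _ g1); first by lia.
  by rewrite -(subr0_eq (etrans (esym g3E) g30)) scalemx_sub.
have ge0 : g e = 0.
  have : 2 *: g e = 0 by rewrite -g30 g3E g00 subr0.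
  by move/eqP; rewrite scaler_eq0 pnatr_eq0 => /eqP.
have eA0 : e *m A = 0.
  have : g e - g 0 = e *m A by rewrite !gE mul0mx add0r addrK.
  by rewrite ge0 g00 subr0 => <-.
by case/eqP: e0; rewrite -[e]mulmx1 -oA mulmxA eA0 mul0mx.
Qed.

Lemma no_rigid_motion_into_line n (L1 L2 L3 : 'M[R]_n) (x y : 'rV[R]_n) :
  (\rank (L1 + L2 + L3)%MS < 2)%N -> \rank (col_mx x y) = 2%N ->
  forall g, rigid_motion g ->
  ~ ((g 0 <= L1)%MS /\ (g x <= L2)%MS /\ (g y <= L3)%MS).
Proof.
move=> rS rxy g [A [T [[oA _] gE]]] [g0 [gx gy]].
set S := (L1 + L2 + L3)%MS in rS *.
have L1S : (L1 <= S)%MS := submx_trans (addsmxSl L1 L2) (addsmxSl _ L3).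
have L2S : (L2 <= S)%MS := submx_trans (addsmxSr L1 L2) (addsmxSl _ L3).
have TS : (T <= S)%MS by move: g0; rewrite gE mul0mx add0r => /submx_trans->.
have zAS z (M : 'M[R]_n) : (M <= S)%MS -> (g z <= M)%MS -> (z *m A <= S)%MS.
  move=> MS gz; rewrite -(addrK T (z *m A)) -gE addmx_sub ?eqmx_opp //.
  exact: submx_trans gz MS.
have : (col_mx x y *m A <= S)%MS.
  by rewrite mul_col_mx col_mx_sub (zAS _ _ L2S gx) (zAS _ _ (addsmxSr _ _) gy).
by move/mxrankS; rewrite mxrankMfree ?orthogonalmx_row_free // rxy; lia.
Qed.

End RigidMotionsOntoLines.

Theorem proposition3p4 (R : realType) (n : nat) (L1 L2 L3 : 'M[R]_n) :
  (2 <= n)%N -> line0 L1 -> line0 L2 -> line0 L3 ->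
  (\rank (L1 + L2 + L3)%MS = 2%N <->
   forall z1 z2 z3 : 'rV[R]_n,
     exists g : 'rV[R]_n -> 'rV[R]_n,
       rigid_motion g /\
       (g z1 <= L1)%MS /\ (g z2 <= L2)%MS /\ (g z3 <= L3)%MS).
Proof.
rewrite /line0 => n2 r1 r2 r3; split => [rS | motions].
  have [[r12 s3] | [r13 s2]] := lines_in_plane r1 rS.
    exact: rigid_motion_onto_coplanar_lines.
  move=> z1 z2 z3.
  have [g [mg [g1 [g3 g2]]]] := rigid_motion_onto_coplanar_lines r2 r13 s2 z1 z3 z2.
  by exists g.
have [rS | rS | //] := ltngtP (\rank (L1 + L2 + L3)%MS) 2.
  pose E : 'M[R]_(1 + 1, n) := pid_mx 2.
  have rE : \rank (col_mx (usubmx E) (dsubmx E)) = 2%N by rewrite vsubmxK rank_pid_mx.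
  have [g [mg gL]] := motions 0 (usubmx E) (dsubmx E).
  by case: (no_rigid_motion_into_line rS rE mg).
pose e : 'rV[R]_n := pid_mx 1.
have e0 : e != 0 by rewrite -mxrank_eq0 rank_pid_mx //; lia.
have [g [mg ge]] := motions 0 e (2 *: e).
by case: (no_rigid_motion_onto_independent_lines r1 r2 r3 rS e0 mg).
Qed.
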